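(* For every prime power $q>2$ there exist $n\ge3$ and an equidistant linear code $\mathcal{U}\subseteq\mathbb{P}_q(n)$ with $|\mathcal{U}|\ge 2^{n+1}$.
   Context: $\mathbb{P}_q(n)$ denotes the set of all subspaces of $\mathbb{F}_q^n$. For subspaces $X,Y$ the subspace distance is $d_S(X,Y)=\dim X+\dim Y-2\dim(X\cap Y)$. A linear code in $\mathbb{P}_q(n)$ is a subset $\mathcal{U}\subseteq\mathbb{P}_q(n)$ with $\{0\}\in\mathcal{U}$ for which there exists a map $\boxplus:\mathcal{U}\times\mathcal{U}\to\mathcal{U}$ such that (i) $(\mathcal{U},\boxplus)$ is an abelian group; (ii) its identity element is $\{0\}$; (iii) $X\boxplus X=\{0\}$ for all $X\in\mathcal{U}$; (iv) $d_S(Y_1\boxplus X,Y_2\boxplus X)=d_S(Y_1,Y_2)$ for all $Y_1,Y_2,X\in\mathcal{U}$. It is equidistant if there is $r$ with $d_S(X,Y)=r$ for all distinct $X,Y\in\mathcal{U}$. *)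

From mathcomp Require Import all_boot all_order all_algebra.
Set Implicit Arguments. Unset Strict Implicit. Unset Printing Implicit Defensive.
Import GRing.Theory.
Local Open Scope ring_scope.

Definition subspace (F : fieldType) (n : nat) := {vspace 'rV[F]_n}.

Definition dS (F : fieldType) (n : nat) (X Y : subspace F n) : nat :=
  (\dim X + \dim Y - 2 * \dim (X :&: Y))%N.

Definition is_linear_code (F : fieldType) (n : nat) (U : seq (subspace F n)) : Prop :=
  (0%VS \in U) /\
  exists boxplus : subspace F n -> subspace F n -> subspace F n,
    (forall X Y, X \in U -> Y \in U -> boxplus X Y \in U) /\
        (forall X Y Z, X \in U -> Y \in U -> Z \in U ->
            boxplus X (boxplus Y Z) = boxplus (boxplus X Y) Z) /\
        (forall X Y, X \in U -> Y \in U -> boxplus X Y = boxplus Y X) /\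
        (forall X, X \in U -> boxplus X 0%VS = X /\ boxplus 0%VS X = X) /\
        (forall X, X \in U -> exists2 Y, Y \in U & boxplus X Y = 0%VS) /\
        (forall X, X \in U -> boxplus X X = 0%VS) /\
        (forall Y1 Y2 X, Y1 \in U -> Y2 \in U -> X \in U ->
            dS (boxplus Y1 X) (boxplus Y2 X) = dS Y1 Y2).

Definition equidistant (F : fieldType) (n : nat) (U : seq (subspace F n)) : Prop :=
  exists r : nat, forall X Y, X \in U -> Y \in U -> X != Y -> dS X Y = r.

From mathcomp Require Import all_boot all_order all_algebra.
Set Implicit Arguments.
Unset Strict Implicit.
Unset Printing Implicit Defensive.
Import GRing.Theory.
Local Open Scope ring_scope.

(* Take {0} together with planes of F^8 that all contain a fixed line and
   pairwise meet only in it: every two members are at distance 2.  There are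
   |F|^6 >= 3^6 > 2^9 such planes, so we get 2^9 members.  An equidistant code
   becomes linear by transporting the group law of (Z/2)^9 along any bijection
   sending 0 to {0}: translations are bijections, so they preserve a constant
   distance. *)

Lemma leq_card_inj (T T' : finType) :
  (#|T| <= #|T'|)%N -> exists f : T -> T', injective f.
Proof.
move=> leTT'; exists (fun x => enum_val (widen_ord leTT' (enum_rank x))).
by move=> x y /enum_val_inj/(congr1 val) eq_rank; apply/enum_rank_inj/val_inj.
Qed.

Section SubspaceDistance.
Variables (F : fieldType) (n : nat).
Implicit Types X Y : subspace F n.

Lemma dSvv X : dS X X = 0%N.
Proof. by rewrite /dS capvv mul2n addnn subnn. Qed.

Lemma dS0v X : dS 0%VS X = \dim X.
Proof. by rewrite /dS cap0v dimv0 add0n muln0 subn0. Qed.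

Lemma dSv0 X : dS X 0%VS = \dim X.
Proof. by rewrite /dS capv0 dimv0 addn0 muln0 subn0. Qed.

Lemma dS_planes (u : 'rV[F]_n) X Y :
  u != 0 -> u \in X -> u \in Y -> \dim X = 2%N -> \dim Y = 2%N -> X != Y ->
  dS X Y = 2%N.
Proof.
move=> u_neq0 uX uY dimX dimY neqXY.
suff dimXY : \dim (X :&: Y) = 1%N by rewrite /dS dimX dimY dimXY.
apply/eqP; rewrite eqn_leq; apply/andP; split.
  rewrite leqNgt; apply: contra neqXY => dim_gt1.
  have eqX : (X :&: Y)%VS == X by rewrite eqEdim capvSl dimX.
  have eqY : (X :&: Y)%VS == Y by rewrite eqEdim capvSr dimY.
  by rewrite -(eqP eqX) (eqP eqY).
have uXY : u \in (X :&: Y)%VS by rewrite memv_cap uX.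
by rewrite memvE in uXY; have := dimvS uXY; rewrite dim_vline u_neq0.
Qed.

End SubspaceDistance.

Section TransportedGroup.
Variables (F : fieldType) (n : nat) (G : finZmodType) (g : G -> subspace F n).
Hypotheses (g_inj : injective g) (g0 : g 0 = 0%VS).
Hypothesis addxx : forall x : G, x + x = 0.

Definition transported_add (X Y : subspace F n) : subspace F n :=
  let ginv Z := odflt 0 [pick t | g t == Z] in g (ginv X + ginv Y).

Lemma transported_add_img a b : transported_add (g a) (g b) = g (a + b).
Proof.
have ginvK t : odflt 0 [pick s | g s == g t] = t.
  by case: pickP => [s /eqP/g_inj | /(_ t)] //; rewrite eqxx.
by rewrite /transported_add !ginvK.
Qed.

Lemma transported_linear_code :
  equidistant (map g (enum G)) -> is_linear_code (map g (enum G)).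
Proof.
move=> [r equi_r].
have gU t : g t \in map g (enum G) by rewrite map_f ?mem_enum.
have addg := transported_add_img.
split; first by rewrite -g0.
exists transported_add.
split; first by move=> _ _ /mapP[x _ ->] /mapP[y _ ->]; rewrite addg.
split; first by move=> _ _ _ /mapP[x _ ->] /mapP[y _ ->] /mapP[z _ ->];
  rewrite !addg addrA.
split; first by move=> _ _ /mapP[x _ ->] /mapP[y _ ->]; rewrite !addg addrC.
split; first by move=> _ /mapP[x _ ->]; rewrite -g0 !addg addr0 add0r.
split; first by move=> _ /mapP[x _ ->]; exists (g x); rewrite ?addg ?addxx.
split; first by move=> _ /mapP[x _ ->]; rewrite addg addxx.
move=> _ _ _ /mapP[a _ ->] /mapP[b _ ->] /mapP[x _ ->]; rewrite !addg.
have [-> | neq_ab] := eqVneq a b; first by rewrite !dSvv.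
rewrite !equi_r ?gU ?(inj_eq g_inj) //.
by apply: contra neq_ab => /eqP/addIr ->.
Qed.

End TransportedGroup.

Section Sunflower.
Variables (F : fieldType) (m : nat).

Definition sunflower_core : 'rV[F]_(2 + m) := row_mx (delta_mx 0 0) 0.

Definition petal_vector (w : 'rV[F]_m) : 'rV[F]_(2 + m) :=
  row_mx (delta_mx 0 1) w.

Definition petal (w : 'rV[F]_m) : subspace F (2 + m) :=
  (<[sunflower_core]> + <[petal_vector w]>)%VS.

Lemma sunflower_core_neq0 : sunflower_core != 0.
Proof.
apply/eqP => /matrixP/(_ 0 (lshift m 0)).
by rewrite row_mxEl !mxE /= => /eqP; rewrite oner_eq0.
Qed.

Lemma sunflower_core_in_petal w : sunflower_core \in petal w.
Proof. by rewrite memvE addvSl. Qed.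

Lemma petal_vectorNcore w : petal_vector w \notin <[sunflower_core]>%VS.
Proof.
apply/vlineP => -[k]; rewrite scale_row_mx => /eq_row_mx[/matrixP/(_ 0 1) + _].
by rewrite !mxE /= mulr0 => /eqP; rewrite oner_eq0.
Qed.

Lemma dim_petal w : \dim (petal w) = 2%N.
Proof.
have free_w : free [:: petal_vector w; sunflower_core].
  by rewrite free_cons seq1_free span_seq1 petal_vectorNcore sunflower_core_neq0.
by have := eqP free_w; rewrite span_cons span_seq1 addvC.
Qed.

Lemma petal_inj : injective petal.
Proof.
move=> w w' eq_petal.
have : petal_vector w' \in petal w.
  by rewrite eq_petal memvE addvSr ?memv_line.
case/memv_addP=> _ /vlineP[a ->] [_ /vlineP[b ->]].
rewrite !scale_row_mx add_row_mx scaler0 add0r => /eq_row_mx[/matrixP/(_ 0 1)].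
by rewrite !mxE /= mulr0 mulr1 add0r => <- ->; rewrite scale1r.
Qed.

Variables (G : finZmodType) (h : G -> 'rV[F]_m).
Hypothesis h_inj : injective h.

Definition sunflower_code_map (t : G) : subspace F (2 + m) :=
  if t == 0 then 0%VS else petal (h t).

Lemma sunflower_code_map0 : sunflower_code_map 0 = 0%VS.
Proof. by rewrite /sunflower_code_map eqxx. Qed.

Lemma dim_sunflower_code_map t :
  \dim (sunflower_code_map t) = if t == 0 then 0%N else 2%N.
Proof. by rewrite /sunflower_code_map; case: eqP; rewrite ?dimv0 ?dim_petal. Qed.

Lemma sunflower_code_map_inj : injective sunflower_code_map.
Proof.
move=> a b eq_ab; have := congr1 (fun X => \dim X) eq_ab.
rewrite /= !dim_sunflower_code_map.
case: eqVneq eq_ab => [-> | a_neq0]; case: eqVneq => [-> | b_neq0] //=.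
by rewrite /sunflower_code_map (negPf a_neq0) (negPf b_neq0) => /petal_inj/h_inj.
Qed.

Lemma dS_sunflower_code_map a b :
  a != b -> dS (sunflower_code_map a) (sunflower_code_map b) = 2%N.
Proof.
have [-> | a_neq0] := eqVneq a 0.
  by rewrite eq_sym => b_neq0; rewrite sunflower_code_map0 dS0v
    dim_sunflower_code_map (negPf b_neq0).
have [-> | b_neq0] := eqVneq b 0.
  by rewrite sunflower_code_map0 dSv0 dim_sunflower_code_map (negPf a_neq0).
move=> neq_ab; rewrite /sunflower_code_map (negPf a_neq0) (negPf b_neq0).
apply: (dS_planes sunflower_core_neq0); rewrite ?sunflower_core_in_petal ?dim_petal //.
by rewrite (inj_eq petal_inj) (inj_eq h_inj).
Qed.

Lemma sunflower_code_equidistant :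
  equidistant (map sunflower_code_map (enum G)).
Proof.
exists 2%N => _ _ /mapP[a _ ->] /mapP[b _ ->] neq_ab.
by apply: dS_sunflower_code_map; apply: contra neq_ab => /eqP ->.
Qed.

End Sunflower.

Theorem corollary3 (F : finFieldType) :
  (2 < #|F|)%N ->
  exists (n : nat) (U : seq (subspace F n)),
    [/\ (3 <= n)%N, uniq U, is_linear_code U, equidistant U
      & (2 ^ n.+1 <= size U)%N].
Proof.
move=> F_gt2; pose G := 'rV[bool]_9.
have card_G_le : (#|{: G}| <= #|{: 'rV[F]_6}|)%N.
  rewrite !card_mx card_bool (@leq_trans (3 ^ 6)) //.
  by rewrite leq_exp2r.
have [h h_inj] := leq_card_inj card_G_le.
have addxx (x : G) : x + x = 0.
  by apply/matrixP => i j; rewrite !mxE; case: (x i j).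
pose g := sunflower_code_map h.
have equi : equidistant (map g (enum G)) := sunflower_code_equidistant h_inj.
exists (2 + 6)%N, (map g (enum G)); split=> //.
- by rewrite map_inj_uniq ?enum_uniq //; apply: sunflower_code_map_inj.
- exact: transported_linear_code (sunflower_code_map_inj h_inj)
    (sunflower_code_map0 h) addxx equi.
- by rewrite size_map -cardE card_mx card_bool.
Qed.
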